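(* Let $\mu\in\mathbb{R}$, $c\ge 0$, $\sigma>0$, $\eta_c>0$, $\eta_s>0$. Let $u_c^*$ be the optimal value of $$\max_{p_0\in\mathbb{R},\,r\in[0,1]}\; p_0+r\mu-c-\eta_c r^2\sigma^2 \quad\text{subject to}\quad (1-r)\mu-p_0-\eta_s(1-r)^2\sigma^2\ge 0,$$ and let $u_{c,r=0}^*$ be the optimal value of the same problem with $r$ fixed to $0$ (so $u_{c,r=0}^*=\mu-c-\eta_s\sigma^2$). Then $$\Delta:=u_c^*-u_{c,r=0}^*=\sigma^2\frac{\eta_s^2}{\eta_s+\eta_c},$$ and $\Delta$ is increasing in $\sigma$, increasing in $\eta_s$, and decreasing in $\eta_c$.
   Context: Interpretation: a creator (cost $c$) sells an NFT at mint price $p_0$ with royalty rate $r$ to a speculator, who resells it to an end-buyer at the realized valuation $V$ with $\mathbb{E}[V]=\mu$, $\mathrm{Var}(V)=\sigma^2$. Creator profit is $p_0+rV-c$, speculator profit is $(1-r)V-p_0$; both agents have mean-variance utility $\mathbb{E}[\text{profit}]-\eta\,\mathrm{Var}[\text{profit}]$ with risk-aversion coefficients $\eta_c$ (creator) and $\eta_s$ (speculator). The constraint is the speculator's participation constraint. *)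

From Stdlib Require Import Reals Lra.
Open Scope R_scope.

(* Creator's mean-variance utility: E[p0 + rV - c] - eta_c Var[p0 + rV - c]. *)
Definition creator_util (mu c sigma eta_c p0 r : R) : R :=
  p0 + r * mu - c - eta_c * r ^ 2 * sigma ^ 2.

(* Speculator's participation constraint:
   E[(1-r)V - p0] - eta_s Var[(1-r)V - p0] >= 0. *)
Definition spec_participation (mu sigma eta_s p0 r : R) : Prop :=
  (1 - r) * mu - p0 - eta_s * (1 - r) ^ 2 * sigma ^ 2 >= 0.

Definition is_opt_value (mu c sigma eta_c eta_s v : R) : Prop :=
  (exists p0 r, 0 <= r <= 1 /\ spec_participation mu sigma eta_s p0 r /\
                creator_util mu c sigma eta_c p0 r = v) /\
  (forall p0 r, 0 <= r <= 1 -> spec_participation mu sigma eta_s p0 r ->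
                creator_util mu c sigma eta_c p0 r <= v).

Definition is_opt_value_r0 (mu c sigma eta_c eta_s v : R) : Prop :=
  (exists p0, spec_participation mu sigma eta_s p0 0 /\
              creator_util mu c sigma eta_c p0 0 = v) /\
  (forall p0, spec_participation mu sigma eta_s p0 0 ->
              creator_util mu c sigma eta_c p0 0 <= v).

Definition is_Delta (mu c sigma eta_c eta_s d : R) : Prop :=
  exists u u0, is_opt_value mu c sigma eta_c eta_s u /\
               is_opt_value_r0 mu c sigma eta_c eta_s u0 /\ d = u - u0.

From Stdlib Require Import Reals Lra Psatz.
Open Scope R_scope.

(* The participation constraint binds at the optimum, so the
   creator's utility is mu - c minus sigma^2 times the total risk premium
   eta_s (1 - r)^2 + eta_c r^2.  This quadratic in r is minimised at the
   risk-sharing royalty r = eta_s / (eta_s + eta_c), in [0, 1], with minimum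
   eta_s eta_c / (eta_s + eta_c); at r = 0 it equals eta_s. *)

Definition binding_price (mu sigma eta_s r : R) : R :=
  (1 - r) * mu - eta_s * (1 - r) ^ 2 * sigma ^ 2.

Definition risk_premium (eta_s eta_c r : R) : R :=
  eta_s * (1 - r) ^ 2 + eta_c * r ^ 2.

Definition optimal_royalty (eta_s eta_c : R) : R := eta_s / (eta_s + eta_c).

Definition min_risk_premium (eta_s eta_c : R) : R := eta_s * eta_c / (eta_s + eta_c).

Definition royalty_gain (sigma eta_c eta_s : R) : R :=
  sigma ^ 2 * (eta_s ^ 2 / (eta_s + eta_c)).

Section RiskPremium.

Variables eta_s eta_c : R.
Hypothesis eta_s_gt0 : 0 < eta_s.
Hypothesis eta_c_gt0 : 0 < eta_c.

Lemma optimal_royalty_in01 : 0 <= optimal_royalty eta_s eta_c <= 1.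
Proof.
  unfold optimal_royalty; split.
  - apply Rlt_le, Rdiv_lt_0_compat; lra.
  - apply Rmult_le_reg_r with (eta_s + eta_c); [lra|].
    unfold Rdiv; rewrite Rmult_assoc, Rinv_l by lra; lra.
Qed.

Lemma risk_premium_optimal_royalty :
  risk_premium eta_s eta_c (optimal_royalty eta_s eta_c) = min_risk_premium eta_s eta_c.
Proof. unfold risk_premium, optimal_royalty, min_risk_premium; field; lra. Qed.

Lemma min_risk_premium_le r : min_risk_premium eta_s eta_c <= risk_premium eta_s eta_c r.
Proof.
  unfold min_risk_premium, risk_premium.
  apply Rmult_le_reg_r with (eta_s + eta_c); [lra|].
  unfold Rdiv; rewrite Rmult_assoc, Rinv_l, Rmult_1_r by lra.
  (* (eta_s + eta_c) * risk_premium - eta_s eta_c = ((eta_s + eta_c) r - eta_s)^2 *)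
  pose proof (pow2_ge_0 ((eta_s + eta_c) * r - eta_s)); nra.
Qed.

End RiskPremium.

Lemma creator_util_le_binding mu c sigma eta_c eta_s p0 r :
  spec_participation mu sigma eta_s p0 r ->
  creator_util mu c sigma eta_c p0 r <= mu - c - sigma ^ 2 * risk_premium eta_s eta_c r.
Proof. unfold spec_participation, creator_util, risk_premium; lra. Qed.

Lemma creator_util_binding mu c sigma eta_c eta_s r :
  creator_util mu c sigma eta_c (binding_price mu sigma eta_s r) r
  = mu - c - sigma ^ 2 * risk_premium eta_s eta_c r.
Proof. unfold creator_util, binding_price, risk_premium; ring. Qed.

Lemma spec_participation_binding mu sigma eta_s r :
  spec_participation mu sigma eta_s (binding_price mu sigma eta_s r) r.
Proof. unfold spec_participation, binding_price; lra. Qed.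

Lemma is_opt_value_unique mu c sigma eta_c eta_s u v :
  is_opt_value mu c sigma eta_c eta_s u -> is_opt_value mu c sigma eta_c eta_s v -> u = v.
Proof.
  intros [[p [r [Hr [Hp <-]]]] Hu] [[q [s [Hs [Hq <-]]]] Hv].
  apply Rle_antisym; [apply Hv | apply Hu]; assumption.
Qed.

Lemma is_opt_value_r0_unique mu c sigma eta_c eta_s u v :
  is_opt_value_r0 mu c sigma eta_c eta_s u -> is_opt_value_r0 mu c sigma eta_c eta_s v ->
  u = v.
Proof.
  intros [[p [Hp <-]] Hu] [[q [Hq <-]] Hv].
  apply Rle_antisym; [apply Hv | apply Hu]; assumption.
Qed.

Lemma is_opt_value_min_risk_premium mu c sigma eta_c eta_s :
  0 < eta_c -> 0 < eta_s ->
  is_opt_value mu c sigma eta_c eta_s (mu - c - sigma ^ 2 * min_risk_premium eta_s eta_c).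
Proof.
  intros Hec Hes; split.
  - set (r := optimal_royalty eta_s eta_c).
    exists (binding_price mu sigma eta_s r), r.
    split; [|split].
    + now apply optimal_royalty_in01.
    + apply spec_participation_binding.
    + now rewrite creator_util_binding, risk_premium_optimal_royalty.
  - intros p0 r _ Hp.
    eapply Rle_trans; [now apply creator_util_le_binding with (eta_s := eta_s)|].
    pose proof (min_risk_premium_le eta_s eta_c Hes Hec r).
    pose proof (pow2_ge_0 sigma); nra.
Qed.

Lemma is_opt_value_r0_no_royalty mu c sigma eta_c eta_s :
  is_opt_value_r0 mu c sigma eta_c eta_s (mu - c - eta_s * sigma ^ 2).
Proof.
  split.
  - exists (binding_price mu sigma eta_s 0).
    unfold spec_participation, creator_util, binding_price; split; lra.
  - intros p0 Hp; unfold spec_participation, creator_util in *; lra.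
Qed.

Lemma is_Delta_royalty_gain mu c sigma eta_c eta_s d :
  0 < eta_c -> 0 < eta_s ->
  is_Delta mu c sigma eta_c eta_s d -> d = royalty_gain sigma eta_c eta_s.
Proof.
  intros Hec Hes [u [u0 [Hu [Hu0 ->]]]].
  rewrite (is_opt_value_unique _ _ _ _ _ _ _ Hu (is_opt_value_min_risk_premium mu c sigma _ _ Hec Hes)),
          (is_opt_value_r0_unique _ _ _ _ _ _ _ Hu0 (is_opt_value_r0_no_royalty mu c sigma eta_c eta_s)).
  unfold royalty_gain, min_risk_premium; field; lra.
Qed.

Lemma royalty_gain_lt_sigma sigma sigma' eta_c eta_s :
  0 < sigma -> sigma < sigma' -> 0 < eta_c -> 0 < eta_s ->
  royalty_gain sigma eta_c eta_s < royalty_gain sigma' eta_c eta_s.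
Proof.
  intros Hs Hss' Hec Hes; unfold royalty_gain.
  apply Rmult_lt_compat_r; [apply Rdiv_lt_0_compat|]; nra.
Qed.

Lemma royalty_gain_lt_eta_s sigma eta_c eta_s eta_s' :
  0 < sigma -> 0 < eta_c -> 0 < eta_s -> eta_s < eta_s' ->
  royalty_gain sigma eta_c eta_s < royalty_gain sigma eta_c eta_s'.
Proof.
  intros Hs Hec Hes Hee'; unfold royalty_gain.
  apply Rmult_lt_compat_l; [nra|].
  apply Rmult_lt_reg_r with ((eta_s + eta_c) * (eta_s' + eta_c)); [nra|].
  replace (eta_s ^ 2 / (eta_s + eta_c) * ((eta_s + eta_c) * (eta_s' + eta_c)))
    with (eta_s ^ 2 * (eta_s' + eta_c)) by (field; lra).
  replace (eta_s' ^ 2 / (eta_s' + eta_c) * ((eta_s + eta_c) * (eta_s' + eta_c)))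
    with (eta_s' ^ 2 * (eta_s + eta_c)) by (field; lra).
  (* the difference is eta_s eta_s' (eta_s' - eta_s) + eta_c (eta_s'^2 - eta_s^2) *)
  assert (0 < eta_s * eta_s' * (eta_s' - eta_s)) by (apply Rmult_lt_0_compat; nra).
  assert (0 < eta_c * (eta_s' - eta_s) * (eta_s' + eta_s)) by (apply Rmult_lt_0_compat; nra).
  nra.
Qed.

Lemma royalty_gain_gt_eta_c sigma eta_c eta_c' eta_s :
  0 < sigma -> 0 < eta_c -> eta_c < eta_c' -> 0 < eta_s ->
  royalty_gain sigma eta_c' eta_s < royalty_gain sigma eta_c eta_s.
Proof.
  intros Hs Hec Hcc' Hes; unfold royalty_gain.
  apply Rmult_lt_compat_l; [nra|].
  apply Rmult_lt_compat_l; [nra|].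
  apply Rinv_lt_contravar; nra.
Qed.

Theorem theorem2 (mu c sigma eta_c eta_s : R)
  (Hc : 0 <= c) (Hsigma : 0 < sigma) (Hetac : 0 < eta_c) (Hetas : 0 < eta_s) :
  (* both optimal values exist *)
  (exists u, is_opt_value mu c sigma eta_c eta_s u) /\
  (exists u0, is_opt_value_r0 mu c sigma eta_c eta_s u0) /\
  (* u_{c,r=0}^* = mu - c - eta_s sigma^2 *)
  (forall u0, is_opt_value_r0 mu c sigma eta_c eta_s u0 ->
     u0 = mu - c - eta_s * sigma ^ 2) /\
  (* closed form of Delta *)
  (forall d, is_Delta mu c sigma eta_c eta_s d ->
     d = sigma ^ 2 * (eta_s ^ 2 / (eta_s + eta_c))) /\
  (* Delta strictly increasing in sigma *)
  (forall sigma' d d', sigma < sigma' ->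
     is_Delta mu c sigma eta_c eta_s d -> is_Delta mu c sigma' eta_c eta_s d' ->
     d < d') /\
  (* Delta strictly increasing in eta_s *)
  (forall eta_s' d d', eta_s < eta_s' ->
     is_Delta mu c sigma eta_c eta_s d -> is_Delta mu c sigma eta_c eta_s' d' ->
     d < d') /\
  (* Delta strictly decreasing in eta_c *)
  (forall eta_c' d d', eta_c < eta_c' ->
     is_Delta mu c sigma eta_c eta_s d -> is_Delta mu c sigma eta_c' eta_s d' ->
     d' < d).
Proof.
  split; [|split; [|split; [|split; [|split; [|split]]]]].
  - eexists; now apply is_opt_value_min_risk_premium.
  - eexists; apply is_opt_value_r0_no_royalty.
  - intros u0 Hu0; exact (is_opt_value_r0_unique _ _ _ _ _ _ _ Hu0 (is_opt_value_r0_no_royalty _ _ _ _ _)).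
  - intros d Hd; exact (is_Delta_royalty_gain _ _ _ _ _ _ Hetac Hetas Hd).
  - intros sigma' d d' Hlt Hd Hd'.
    rewrite (is_Delta_royalty_gain _ _ _ _ _ _ Hetac Hetas Hd),
            (is_Delta_royalty_gain _ _ _ _ _ _ Hetac Hetas Hd').
    now apply royalty_gain_lt_sigma.
  - intros eta_s' d d' Hlt Hd Hd'.
    rewrite (is_Delta_royalty_gain _ _ _ _ _ _ Hetac Hetas Hd),
            (is_Delta_royalty_gain _ _ _ _ _ _ Hetac (Rlt_trans _ _ _ Hetas Hlt) Hd').
    now apply royalty_gain_lt_eta_s.
  - intros eta_c' d d' Hlt Hd Hd'.
    rewrite (is_Delta_royalty_gain _ _ _ _ _ _ Hetac Hetas Hd),
            (is_Delta_royalty_gain _ _ _ _ _ _ (Rlt_trans _ _ _ Hetac Hlt) Hetas Hd').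
    now apply royalty_gain_gt_eta_c.
Qed.
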